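(* Let $P, Q \subseteq \mathbb{R}^7$ be distinct associative $3$-planes. Then $\Theta(P) \cap \Theta(Q) \subseteq \Lambda^2_7$.
   Context: Equip $\mathbb{R}^7$ with its standard inner product, orientation and basis. Let $\varphi = e_{123} - e_{167} - e_{527} - e_{563} - e_{415} - e_{426} - e_{437}$ ($e_{ijk} = e_i\wedge e_j\wedge e_k$), $\psi = \star\varphi = e_{4567} - e_{4523} - e_{4163} - e_{4127} - e_{2637} - e_{1537} - e_{1526}$, and define $\times$ by $\langle u \times v, w \rangle = \varphi(u,v,w)$. A $3$-dimensional subspace is associative if closed under $\times$. For $u,v$: $u\wedge v$ is the 2-form $(a,b)\mapsto \langle u,a\rangle\langle v,b\rangle - \langle u,b\rangle\langle v,a\rangle$; $u\lrcorner\varphi$ is the 2-form $(a,b)\mapsto \varphi(u,a,b)$; $\Psi_{uv}$ is the 2-form $(a,b)\mapsto\psi(u,v,a,b)$. $\Lambda^2_7 = \{u \lrcorner \varphi : u \in \mathbb{R}^7\}$. For associative $P$, $\Theta(P) = \Lambda^2(P) \oplus \Psi(P)$ where $\Lambda^2(P) = \mathrm{Span}\{u\wedge v: u,v\in P\}$ and $\Psi(P) = \mathrm{Span}\{\Psi_{uv} : u,v\in P\}$. *)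

(* R^7 = row vectors 'rV[R]_7 over a real field R;
   2-forms on R^7 are represented by their Gram matrices
   omega i j = omega(e_i, e_j) in 'M[R]_7. Paper indices 1..7 correspond
   to ordinals 0..6. *)
From HB Require Import structures.
From mathcomp Require Import all_boot all_order all_algebra.
Set Implicit Arguments. Unset Strict Implicit. Unset Printing Implicit Defensive.
Import Order.TTheory GRing.Theory Num.Theory.
Local Open Scope ring_scope.

Section G2.
Variable R : realFieldType.
Notation vec := 'rV[R]_7.
Notation form2 := 'M[R]_7.

Definition dot (u v : vec) : R := \sum_(i < 7) u 0 i * v 0 i.

Definition ebas (k : 'I_7) : vec := delta_mx 0 k.

(* coordinate e^k(x) with paper index k in 1..7 *)
Definition coord7 (k : nat) (x : vec) : R := x 0 (inord k.-1).

Definition e3 (i j k : nat) (u v w : vec) : R :=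
  let c := [:: i; j; k] in let x := [:: u; v; w] in
  \det (\matrix_(a < 3, b < 3) coord7 (nth 0%N c a) (nth 0 x b)).

Definition e4 (i j k l : nat) (u v w z : vec) : R :=
  let c := [:: i; j; k; l] in let x := [:: u; v; w; z] in
  \det (\matrix_(a < 4, b < 4) coord7 (nth 0%N c a) (nth 0 x b)).

Definition phi (u v w : vec) : R :=
  e3 1 2 3 u v w - e3 1 6 7 u v w - e3 5 2 7 u v w - e3 5 6 3 u v w
  - e3 4 1 5 u v w - e3 4 2 6 u v w - e3 4 3 7 u v w.

Definition psi (u v w z : vec) : R :=
  e4 4 5 6 7 u v w z - e4 4 5 2 3 u v w z - e4 4 1 6 3 u v w z
  - e4 4 1 2 7 u v w z - e4 2 6 3 7 u v w z - e4 1 5 3 7 u v w z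
  - e4 1 5 2 6 u v w z.

(* cross product: <u x v, w> = phi(u,v,w); coordinates in the orthonormal basis *)
Definition cross (u v : vec) : vec := \row_(k < 7) phi u v (ebas k).

Definition assoc_plane (P : {vspace vec}) : Prop :=
  \dim P = 3%N /\ (forall u v, u \in P -> v \in P -> cross u v \in P).

Definition wedge (u v : vec) : form2 :=
  \matrix_(a < 7, b < 7)
    (dot u (ebas a) * dot v (ebas b) - dot u (ebas b) * dot v (ebas a)).

Definition contract (u : vec) : form2 :=
  \matrix_(a < 7, b < 7) phi u (ebas a) (ebas b).

Definition Psi (u v : vec) : form2 :=
  \matrix_(a < 7, b < 7) psi u v (ebas a) (ebas b).

Definition Lambda27 (w : form2) : Prop := exists u : vec, w = contract u.

Definition in_span (S : form2 -> Prop) (w : form2) : Prop :=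
  forall W : {vspace form2}, (forall x, S x -> x \in W) -> w \in W.

Definition Lambda2P (P : {vspace vec}) (w : form2) : Prop :=
  in_span (fun x => exists u v, [/\ u \in P, v \in P & x = wedge u v]) w.

Definition PsiP (P : {vspace vec}) (w : form2) : Prop :=
  in_span (fun x => exists u v, [/\ u \in P, v \in P & x = Psi u v]) w.

Definition Theta (P : {vspace vec}) (w : form2) : Prop :=
  exists w1 w2, [/\ Lambda2P P w1, PsiP P w2 & w = w1 + w2].

End G2.

(* Fix an orthogonal frame (a, b, a × b) of P and let π be the orthogonal projection
   onto P.  Modulo Λ²_7, every element of Θ(P) acts on R^7 as x ↦ n × (π x − x/3) for
   some n ∈ P; it suffices to check this on the six 2-forms b∧c, c∧a, a∧b, a⌟φ, b⌟φ,
   c⌟φ, which span Θ(P).  If w ∈ Θ(P) ∩ Θ(Q) is not in Λ²_7, we get nonzero n ∈ P and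
   m ∈ Q inducing the same operator.  This operator kills m and its kernel is the line
   of n, so m = l n.  On P ∩ n^⊥ it is (2/3) n ×, and comparing with the Q-description
   gives (2 + l) x = 3 l π_Q x there, so P ⊆ Q unless l = −2.  Symmetrically Q ⊆ P
   unless n = −2 m; as m = −2 n and n = −2 m cannot both hold, one plane contains the
   other, and they are equal since both are 3-dimensional. *)

From HB Require Import structures.
From mathcomp Require Import all_boot all_order all_algebra ring lra.
Set Implicit Arguments. Unset Strict Implicit. Unset Printing Implicit Defensive.
Import Order.TTheory GRing.Theory Num.Theory.
Local Open Scope ring_scope.

Lemma span_ind (K : fieldType) (vT : vectType K) (S : vT -> Prop) (X : seq vT) :
  S 0 -> (forall k u v, S u -> S v -> S (k *: u + v)) -> {in X, forall x, S x} ->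
  {in <<X>>%VS, forall v, S v}.
Proof.
move=> S0 S_lin; elim: X => [_ v|x X IHX SX v]; first by rewrite span_nil memv0 => /eqP->.
rewrite span_cons => /memv_addP[_ /vlineP[k ->] [y Xy ->]].
apply: S_lin; first by apply: SX; rewrite mem_head.
by apply: IHX Xy => z Xz; apply: SX; rewrite mem_behead.
Qed.

Section G2.
Variable R : realFieldType.
Implicit Types (u v w x y z n m : 'rV[R]_7) (M N : 'M[R]_7).

Lemma coord7_ord u (i : 'I_7) : coord7 i.+1 u = u 0 i.
Proof. by rewrite /coord7 inord_val. Qed.

Lemma coord7_ebas (i k : nat) : (i < 7)%N -> (k < 7)%N ->
  coord7 i.+1 (ebas R (inord k)) = (k == i)%:R.
Proof.
by move=> lt_i7 lt_k7; rewrite /coord7 /ebas mxE /= -(inj_eq val_inj) /= !inordK // eq_sym.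
Qed.

Lemma coord7D k u v : coord7 k (u + v) = coord7 k u + coord7 k v.
Proof. by rewrite /coord7 mxE. Qed.
Lemma coord7N k u : coord7 k (- u) = - coord7 k u.
Proof. by rewrite /coord7 mxE. Qed.
Lemma coord7Z k (s : R) u : coord7 k (s *: u) = s * coord7 k u.
Proof. by rewrite /coord7 mxE. Qed.
Lemma coord70 k : coord7 k (0 : 'rV[R]_7) = 0.
Proof. by rewrite /coord7 mxE. Qed.

Lemma row7P u v :
  coord7 1 u = coord7 1 v -> coord7 2 u = coord7 2 v -> coord7 3 u = coord7 3 v ->
  coord7 4 u = coord7 4 v -> coord7 5 u = coord7 5 v -> coord7 6 u = coord7 6 v ->
  coord7 7 u = coord7 7 v -> u = v.
Proof.
move=> eq1 eq2 eq3 eq4 eq5 eq6 eq7; apply/rowP => i; rewrite -!coord7_ord.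
by case: i => [[|[|[|[|[|[|[|i]]]]]]] lt_i7].
Qed.

Lemma e3E i j k u v w : e3 i j k u v w =
    coord7 i u * (coord7 j v * coord7 k w - coord7 k v * coord7 j w)
  - coord7 j u * (coord7 i v * coord7 k w - coord7 k v * coord7 i w)
  + coord7 k u * (coord7 i v * coord7 j w - coord7 j v * coord7 i w).
Proof.
rewrite /e3; do 3 rewrite !(expand_det_row _ ord0) !big_ord_recl !big_ord0 /cofactor.
by rewrite !det_mx00 !mxE /=; ring.
Qed.

Lemma coord7_cross k u v : coord7 k.+1 (cross u v) = phi u v (ebas R (inord k)).
Proof. by rewrite /coord7 mxE. Qed.

Ltac cross_coord :=
  by rewrite coord7_cross /phi !e3E !coord7_ebas //=; ring.

Lemma coord7_cross1 u v : coord7 1 (cross u v) =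
  coord7 2 u * coord7 3 v - coord7 3 u * coord7 2 v + coord7 4 u * coord7 5 v
  - coord7 5 u * coord7 4 v - coord7 6 u * coord7 7 v + coord7 7 u * coord7 6 v.
Proof. cross_coord. Qed.
Lemma coord7_cross2 u v : coord7 2 (cross u v) =
  - coord7 1 u * coord7 3 v + coord7 3 u * coord7 1 v + coord7 4 u * coord7 6 v
  + coord7 5 u * coord7 7 v - coord7 6 u * coord7 4 v - coord7 7 u * coord7 5 v.
Proof. cross_coord. Qed.
Lemma coord7_cross3 u v : coord7 3 (cross u v) =
  coord7 1 u * coord7 2 v - coord7 2 u * coord7 1 v + coord7 4 u * coord7 7 v
  - coord7 5 u * coord7 6 v + coord7 6 u * coord7 5 v - coord7 7 u * coord7 4 v.
Proof. cross_coord. Qed.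
Lemma coord7_cross4 u v : coord7 4 (cross u v) =
  - coord7 1 u * coord7 5 v - coord7 2 u * coord7 6 v - coord7 3 u * coord7 7 v
  + coord7 5 u * coord7 1 v + coord7 6 u * coord7 2 v + coord7 7 u * coord7 3 v.
Proof. cross_coord. Qed.
Lemma coord7_cross5 u v : coord7 5 (cross u v) =
  coord7 1 u * coord7 4 v - coord7 2 u * coord7 7 v + coord7 3 u * coord7 6 v
  - coord7 4 u * coord7 1 v - coord7 6 u * coord7 3 v + coord7 7 u * coord7 2 v.
Proof. cross_coord. Qed.
Lemma coord7_cross6 u v : coord7 6 (cross u v) =
  coord7 1 u * coord7 7 v + coord7 2 u * coord7 4 v - coord7 3 u * coord7 5 v
  - coord7 4 u * coord7 2 v + coord7 5 u * coord7 3 v - coord7 7 u * coord7 1 v.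
Proof. cross_coord. Qed.
Lemma coord7_cross7 u v : coord7 7 (cross u v) =
  - coord7 1 u * coord7 6 v + coord7 2 u * coord7 5 v + coord7 3 u * coord7 4 v
  - coord7 4 u * coord7 3 v - coord7 5 u * coord7 2 v + coord7 6 u * coord7 1 v.
Proof. cross_coord. Qed.

Lemma dot7E u v : dot u v =
  coord7 1 u * coord7 1 v + coord7 2 u * coord7 2 v + coord7 3 u * coord7 3 v
  + coord7 4 u * coord7 4 v + coord7 5 u * coord7 5 v + coord7 6 u * coord7 6 v
  + coord7 7 u * coord7 7 v.
Proof.
rewrite /dot (eq_bigr (fun i : 'I_7 => coord7 i.+1 u * coord7 i.+1 v)).
  by rewrite !big_ord_recl big_ord0 /=; ring.
by move=> i _; rewrite !coord7_ord.
Qed.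

Definition coord7E := (dot7E, coord7D, coord7N, coord7Z, coord70, coord7_cross1,
  coord7_cross2, coord7_cross3, coord7_cross4, coord7_cross5, coord7_cross6,
  coord7_cross7).

Ltac row7_ring := apply: row7P; rewrite ?coord7E; ring.
Ltac row7_lin := apply: row7P; rewrite ?(coord7D, coord7N, coord7Z, coord70).

Lemma cross_is_bilinear : bilinear_for
  (GRing.Scale.Law.clone _ _ *:%R _) (GRing.Scale.Law.clone _ _ *:%R _) (@cross R).
Proof. by split=> [v|u] s x y; row7_ring. Qed.

HB.instance Definition _ := bilinear_isBilinear.Build R 'rV[R]_7 'rV[R]_7 'rV[R]_7
  _ _ (@cross R) cross_is_bilinear.

Lemma crossC u v : cross v u = - cross u v. Proof. row7_ring. Qed.
Lemma cross_cross u v : cross u (cross u v) = dot u v *: u - dot u u *: v.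
Proof. row7_ring. Qed.

Lemma crossuu u : cross u u = 0.
Proof. row7_ring. Qed.

Lemma dot_is_bilinear : bilinear_for
  (GRing.Scale.Law.clone _ _ *%R _) (GRing.Scale.Law.clone _ _ *%R _) (@dot R).
Proof. by split=> [v|u] s x y /=; rewrite !coord7E; ring. Qed.

HB.instance Definition _ := bilinear_isBilinear.Build R 'rV[R]_7 'rV[R]_7 R
  _ _ (@dot R) dot_is_bilinear.

Lemma dotC u v : dot v u = dot u v.
Proof. by rewrite !dot7E; ring. Qed.

Lemma dot_crossl u v : dot u (cross u v) = 0.
Proof. by rewrite !coord7E; ring. Qed.

Lemma dot_crossr u v : dot v (cross u v) = 0.
Proof. by rewrite !coord7E; ring. Qed.

Lemma dot_cross u v : dot (cross u v) (cross u v) = dot u u * dot v v - dot u v ^+ 2.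
Proof. by rewrite !coord7E; ring. Qed.

Lemma phi_dot u v w : phi u v w = dot (cross u v) w.
Proof. by rewrite /phi !e3E !coord7E; ring. Qed.

Lemma dot_ebas u (i : 'I_7) : dot u (ebas R i) = u 0 i.
Proof.
rewrite /dot (bigD1 i) //= big1 => [|j neq_ji]; rewrite /ebas !mxE ?eqxx /=.
  by rewrite mulr1 addr0.
by rewrite (negbTE neq_ji) mulr0.
Qed.

Lemma dot_eq0 u : (dot u u == 0) = (u == 0).
Proof.
apply/eqP/eqP => [uu0|->]; last by rewrite linear0l.
have sq_ge0 (i : 'I_7) : true -> 0 <= u 0 i * u 0 i by rewrite -expr2 sqr_ge0.
apply/rowP => i; have /eqP := psumr_eq0P sq_ge0 uu0 (i := i) isT.
by rewrite mulf_eq0 orbb mxE => /eqP.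
Qed.

Lemma cross_cross_r u v : cross v (cross u v) = dot v v *: u - dot u v *: v.
Proof. by rewrite [cross u v]crossC linearNr /= cross_cross opprB (dotC u). Qed.

Lemma cross_eq0_colinear n y : cross n y = 0 -> dot n n *: y = dot n y *: n.
Proof. by move=> ny0; apply/eqP; rewrite eq_sym -subr_eq0 -cross_cross ny0 linear0r. Qed.

Lemma cross_dot_eq0 n y : n != 0 -> cross n y = 0 -> dot n y = 0 -> y = 0.
Proof.
move=> n_neq0 /cross_eq0_colinear + ny0; rewrite ny0 scale0r => /eqP.
by rewrite scaler_eq0 dot_eq0 (negbTE n_neq0) => /eqP.
Qed.

Lemma e4E i j k l u v w z : e4 i j k l u v w z =
  coord7 i u * e3 j k l v w z - coord7 j u * e3 i k l v w z
  + coord7 k u * e3 i j l v w z - coord7 l u * e3 i j k v w z.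
Proof.
rewrite /e4 /e3 (expand_det_col _ ord0) !big_ord_recl big_ord0 /cofactor !mxE.
set A := \matrix_(a, b) _.
have minor (r : 'I_4) (c : seq nat) :
    (forall a : 'I_3, nth 0%N [:: i; j; k; l] (lift r a) = nth 0%N c a) ->
  row' r (col' ord0 A) = \matrix_(a < 3, b < 3) coord7 (nth 0%N c a) (nth 0 [:: v; w; z] b).
  by move=> lift_c; apply/matrixP => a b; rewrite !mxE lift_c.
rewrite (minor ord0 [:: j; k; l]) ?(minor (lift ord0 ord0) [:: i; k; l])
  ?(minor (lift ord0 (lift ord0 ord0)) [:: i; j; l])
  ?(minor (lift ord0 (lift ord0 (lift ord0 ord0))) [:: i; j; k]) /=;
  first ring; by case=> [[|[|[|]]]].
Qed.

Lemma psi_dot u v w z :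
  psi u v w z = dot u w * dot v z - dot u z * dot v w - phi (cross u v) w z.
Proof. by rewrite /psi !e4E phi_dot !e3E !coord7E; ring. Qed.

Lemma row_contract u (i : 'I_7) : row i (contract u) = cross u (ebas R i).
Proof. by apply/rowP => j; rewrite !mxE phi_dot dot_ebas. Qed.

Lemma row_wedge u v (i : 'I_7) : row i (wedge u v) = u 0 i *: v - v 0 i *: u.
Proof. by apply/rowP => j; rewrite !mxE !dot_ebas [v 0 i * _]mulrC. Qed.

Lemma wedge_is_bilinear : bilinear_for
  (GRing.Scale.Law.clone _ _ *:%R _) (GRing.Scale.Law.clone _ _ *:%R _) (@wedge R).
Proof. by split=> [v|u] s x y; apply/matrixP => i j; rewrite !mxE !linearPl /=; ring. Qed.

HB.instance Definition _ := bilinear_isBilinear.Build R 'rV[R]_7 'rV[R]_7 'M[R]_7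
  _ _ (@wedge R) wedge_is_bilinear.

Lemma wedgeC u v : wedge v u = - wedge u v.
Proof. by apply/matrixP => i j; rewrite !mxE; ring. Qed.

Lemma wedgeuu u : wedge u u = 0.
Proof. by apply/matrixP => i j; rewrite !mxE; ring. Qed.

Lemma Psi_wedge u v : Psi u v = wedge u v - contract (cross u v).
Proof. by apply/matrixP => i j; rewrite !mxE psi_dot. Qed.

Lemma contract_is_linear : linear (@contract R).
Proof. by move=> s u v; apply/matrixP => i j; rewrite !mxE !phi_dot !linearPl. Qed.

HB.instance Definition _ := GRing.isSemilinear.Build R 'rV[R]_7 'M[R]_7 _ (@contract R)
  (GRing.semilinear_linear contract_is_linear).

Lemma mul_contract x u : x *m contract u = cross u x.
Proof.
rewrite mulmx_sum_row [in RHS](row_sum_delta x) linear_sumr.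
by apply: eq_bigr => i _; rewrite row_contract linearZr.
Qed.

Lemma mul_wedge x u v : x *m wedge u v = dot x u *: v - dot x v *: u.
Proof.
rewrite mulmx_sum_row /dot !scaler_suml -sumrB.
by apply: eq_bigr => i _; rewrite row_wedge scalerBr !scalerA.
Qed.

(* Since [\sum_i e_i × (u × e_i) = 6 u], [proj7] is a left inverse of [contract];
   [contract (proj7 M)] is the Λ²_7-component of a 2-form [M]. *)
Definition proj7 M : 'rV[R]_7 := 6^-1 *: \sum_(i < 7) cross (ebas R i) (row i M).

Definition compl7 M := M - contract (proj7 M).

Lemma proj7_is_linear : linear proj7.
Proof.
move=> s M N; rewrite /proj7 scalerA mulrC -scalerA -scalerDr; congr (_ *: _).
by rewrite scaler_sumr -big_split; apply: eq_bigr => i _; rewrite linearP linearPr.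
Qed.

HB.instance Definition _ := GRing.isSemilinear.Build R 'M[R]_7 'rV[R]_7 _ proj7
  (GRing.semilinear_linear proj7_is_linear).

Lemma compl7_is_linear : linear compl7.
Proof. by move=> s M N; rewrite /compl7 !linearP /= scalerN scalerBr addrACA. Qed.

HB.instance Definition _ := GRing.isSemilinear.Build R 'M[R]_7 'M[R]_7 _ compl7
  (GRing.semilinear_linear compl7_is_linear).

Lemma proj7_contract u : proj7 (contract u) = u.
Proof.
have cross_ebas i : cross (ebas R i) (cross u (ebas R i)) = u - u 0 i *: ebas R i.
  rewrite [cross u _]crossC linearNr /= cross_cross opprB (dotC u) !dot_ebas.
  by rewrite /ebas mxE !eqxx scale1r.
rewrite /proj7 (eq_bigr _ (fun i _ => congr1 _ (row_contract u i))).
rewrite (eq_bigr _ (fun i _ => cross_ebas i)) sumrB sumr_const card_ord -row_sum_delta.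
by rewrite mulrSr addrK -scaler_nat scalerA mulVf ?scale1r // pnatr_eq0.
Qed.

Lemma proj7_wedge u v : proj7 (wedge u v) = 3^-1 *: cross u v.
Proof.
rewrite /proj7 (eq_bigr (fun i => cross (u 0 i *: ebas R i) v - cross (v 0 i *: ebas R i) u)).
  rewrite sumrB -!linear_sumlz /= -!row_sum_delta (crossC u v) opprK -mulr2n.
  rewrite -scaler_nat scalerA.
  by congr (_ *: _); field.
by move=> i _; rewrite row_wedge linearBr !linearZr /= !linearZl.
Qed.

Lemma compl7_contract u : compl7 (contract u) = 0.
Proof. by rewrite /compl7 proj7_contract subrr. Qed.

Lemma mul_compl7 x M : x *m compl7 M = x *m M - cross (proj7 M) x.
Proof. by rewrite /compl7 mulmxBr mul_contract. Qed.

Section Frame.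
Variables a b : 'rV[R]_7.
Hypotheses (a_neq0 : a != 0) (b_neq0 : b != 0) (ab_orth : dot a b = 0).
Local Notation c := (cross a b).

Definition frame_plane : {vspace 'rV[R]_7} := <<[:: a; b; c]>>%VS.

Definition frame_proj x :=
  (dot x a / dot a a) *: a + (dot x b / dot b b) *: b + (dot x c / dot c c) *: c.

Lemma dot_frame_cross : dot c c = dot a a * dot b b.
Proof. by rewrite dot_cross ab_orth expr0n subr0. Qed.

Let aa_neq0 : dot a a != 0. Proof. by rewrite dot_eq0. Qed.
Let bb_neq0 : dot b b != 0. Proof. by rewrite dot_eq0. Qed.
Let cc_neq0 : dot c c != 0. Proof. by rewrite dot_frame_cross mulf_neq0. Qed.
Let ba_orth : dot b a = 0. Proof. by rewrite dotC. Qed.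

Lemma frame_free : free [:: a; b; c].
Proof.
rewrite !free_cons nil_free andbT !span_cons span_nil addv0; apply/and3P; split.
- apply/negP => /memv_addP[_ /vlineP[k1 ->] [_ /vlineP[k2 ->] a_eq]].
  move: aa_neq0; rewrite {2}a_eq linearDr !linearZr /= ab_orth dot_crossl.
  by rewrite !mulr0 addr0 eqxx.
- apply/negP => /vlineP[k b_eq].
  by move: bb_neq0; rewrite {2}b_eq linearZr /= dot_crossr mulr0 eqxx.
- by rewrite memv0 -dot_eq0.
Qed.

Lemma dim_frame_plane : \dim frame_plane = 3%N.
Proof. by have /eqP := frame_free. Qed.

Lemma frame_proj_is_linear : linear frame_proj.
Proof. by move=> s x y; rewrite /frame_proj !linearPl /=; row7_lin; ring. Qed.

HB.instance Definition _ := GRing.isSemilinear.Build R 'rV[R]_7 'rV[R]_7 _ frame_proj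
  (GRing.semilinear_linear frame_proj_is_linear).

Lemma frame_proj_mem x : frame_proj x \in frame_plane.
Proof. by rewrite !rpredD ?rpredZ // memv_span // !inE eqxx ?orbT. Qed.

Lemma frame_proj_id : {in frame_plane, forall u, frame_proj u = u}.
Proof.
apply: span_ind => [|k u v pu pv|f]; first exact: linear0.
  by rewrite linearP /= pu pv.
rewrite !inE => /or3P[] /eqP-> {f}; rewrite /frame_proj.
- by rewrite ab_orth dot_crossl !mul0r !scale0r !addr0 divff // scale1r.
- by rewrite ba_orth dot_crossr !mul0r !scale0r addr0 add0r divff // scale1r.
- rewrite (dotC a c) (dotC b c) dot_crossl dot_crossr !mul0r !scale0r !add0r.
  by rewrite divff // scale1r.
Qed.

Lemma frame_proj_idem x : frame_proj (frame_proj x) = frame_proj x.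
Proof. exact/frame_proj_id/frame_proj_mem. Qed.

Lemma frame_proj_sym x y : dot (frame_proj x) y = dot x (frame_proj y).
Proof.
rewrite /frame_proj !linearDl !linearDr !linearZl !linearZr /=.
by rewrite (dotC a y) (dotC b y) (dotC c y); ring.
Qed.

Lemma dot_frame_proj x u : u \in frame_plane -> dot (frame_proj x) u = dot x u.
Proof. by move=> Pu; rewrite frame_proj_sym frame_proj_id. Qed.

(* [(2/3) n ×] on the plane and [-(1/3) n ×] on its orthogonal complement: for
   [w] in Θ of the plane, this is how the Λ²_14-component [compl7 w] acts. *)
Definition twist n x := cross n (frame_proj x - 3^-1 *: x).

Lemma twist_self n : n \in frame_plane -> twist n n = 0.
Proof.
by move=> Pn; rewrite /twist frame_proj_id // linearBr linearZr /= crossuu scaler0 subrr.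
Qed.

Lemma twist_kernel n x : n \in frame_plane -> n != 0 -> twist n x = 0 ->
  x = (dot n x / dot n n) *: n.
Proof.
(* With [p = frame_proj x], [N = |n|^2] and [t = <x, n>], the kernel equation reads
   [N (p - x/3) = (2t/3) n]; projecting it gives [N (p - p/3) = (2t/3) n],
   so [p = x] and [x = (t/N) n]. *)
move=> Pn n_neq0 /cross_eq0_colinear; set p := frame_proj x => E1.
have nn_neq0 : dot n n != 0 by rewrite dot_eq0.
have E2 := congr1 frame_proj E1.
rewrite [LHS]linearZ [RHS]linearZ /= [frame_proj (_ - _)]linearB /= in E2.
rewrite [frame_proj (_ *: x)]linearZ /= frame_proj_idem (frame_proj_id Pn) in E2.
rewrite linearBr linearZr /= (dotC p) dot_frame_proj // (dotC x) in E1 E2.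
apply/eqP; rewrite -subr_eq0; apply/eqP.
have -> : x - (dot n x / dot n n) *: n =
    (3 / dot n n) *: (dot n n *: (p - 3^-1 *: p) - dot n n *: (p - 3^-1 *: x))
    + (3 / (2 * dot n n)) *: (dot n n *: (p - 3^-1 *: p) - (dot x n - 3^-1 * dot x n) *: n).
  by clearbody p; rewrite (dotC x); row7_lin; field.
by rewrite E1 E2 !subrr !scaler0 addr0.
Qed.

Let cross_ca : cross c a = dot a a *: b.
Proof. by rewrite crossC cross_cross ab_orth scale0r sub0r opprK. Qed.
Let cross_cb : cross c b = - (dot b b *: a).
Proof. by rewrite crossC cross_cross_r ab_orth scale0r subr0. Qed.
Let cross_bc : cross b c = dot b b *: a.
Proof. by rewrite cross_cross_r ab_orth scale0r subr0. Qed.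
Let cross_ac : cross a c = - (dot a a *: b).
Proof. by rewrite cross_cross ab_orth scale0r sub0r. Qed.

Lemma mul_wedge_frame x :
  [/\ x *m wedge a b = cross c (frame_proj x),
      x *m wedge b c = cross (cross b c) (frame_proj x) &
      x *m wedge c a = cross (cross c a) (frame_proj x)].
Proof.
rewrite cross_bc cross_ca !mul_wedge /frame_proj !linearDr !linearZr /= !linearZl /=.
rewrite cross_ca cross_cb cross_bc cross_ac [cross b a]crossC !crossuu dot_frame_cross //.
by split; row7_lin; field; rewrite bb_neq0 aa_neq0.
Qed.

Lemma compl7_wedge_twist u v : (forall x, x *m wedge u v = cross (cross u v) (frame_proj x)) ->
  forall x, x *m compl7 (wedge u v) = twist (cross u v) x.
Proof.
by move=> uv x; rewrite mul_compl7 uv proj7_wedge /twist linearBr linearZr /= linearZl.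
Qed.

Definition frame_Theta : {vspace 'M[R]_7} := <<[:: wedge b c; wedge c a; wedge a b;
  contract a; contract b; contract c]>>%VS.

Lemma frame_Theta_twist : {in frame_Theta, forall M,
  exists2 n, n \in frame_plane & forall x, x *m compl7 M = twist n x}.
Proof.
have frame_mem f : f \in [:: a; b; c] -> f \in frame_plane by move=> Ff; rewrite memv_span.
have twist0 u : exists2 n, n \in frame_plane & forall x, x *m compl7 (contract u) = twist n x.
  by exists 0 => [|x]; rewrite ?mem0v // compl7_contract mulmx0 /twist linear0l.
apply: span_ind => [|k M N [n Pn Mn] [m Pm Nm] | f].
- by exists 0 => [|x]; rewrite ?mem0v // linear0 mulmx0 /twist linear0l.
- exists (k *: n + m) => [|x]; first by rewrite rpredD ?rpredZ.
  by rewrite linearP mulmxDr -scalemxAr Mn Nm /twist linearPl.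
rewrite !inE => /or4P[| | | /or3P[] ] /eqP->; try exact: twist0.
- exists (cross b c); first by rewrite cross_bc rpredZ ?frame_mem // !inE eqxx.
  by apply: compl7_wedge_twist => x; case: (mul_wedge_frame x).
- exists (cross c a); first by rewrite cross_ca rpredZ ?frame_mem // !inE eqxx ?orbT.
  by apply: compl7_wedge_twist => x; case: (mul_wedge_frame x).
- exists c; first by rewrite frame_mem // !inE eqxx ?orbT.
  by apply: compl7_wedge_twist => x; case: (mul_wedge_frame x).
Qed.

Lemma Theta_sub_frame : {in frame_plane &, forall u v, cross u v \in frame_plane} ->
  forall M, Theta frame_plane M -> M \in frame_Theta.
Proof.
move=> cross_closed M.
have contractW : {in frame_plane, forall u, contract u \in frame_Theta}.
  apply: span_ind => [|k u v Wu Wv|f]; first by rewrite linear0 mem0v.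
    by rewrite linearP rpredD ?rpredZ.
  by rewrite !inE => /or3P[]/eqP->; rewrite memv_span // !inE eqxx ?orbT.
have wedgeW u : u \in frame_plane -> {in frame_plane, forall v, wedge u v \in frame_Theta}.
  move: u; apply: span_ind => [v _|k u u' Wu Wu' v Pv|f Ff].
  - by rewrite linear0l mem0v.
  - by rewrite linearPl /= rpredD ?rpredZ ?Wu ?Wu'.
  apply: span_ind => [|k v v' Wv Wv'|g Fg]; first by rewrite linear0r mem0v.
    by rewrite linearPr /= rpredD ?rpredZ.
  by move: Ff Fg; rewrite !inE => /or3P[]/eqP-> /or3P[]/eqP->; rewrite ?wedgeuu ?mem0v //
    ?(wedgeC a b) ?(wedgeC b c) ?(wedgeC c a) ?rpredN memv_span // !inE eqxx ?orbT.
case=> [M1 [M2 [LM1 PsiM2 ->]]]; apply: rpredD; [apply: LM1 | apply: PsiM2].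
  by move=> _ [u [v [Pu Pv ->]]]; apply: wedgeW.
by move=> _ [u [v [Pu Pv ->]]]; rewrite Psi_wedge rpredB ?wedgeW ?contractW ?cross_closed.
Qed.
End Frame.

Section Rigidity.
Variables a b a' b' n m : 'rV[R]_7.
Hypotheses (a_neq0 : a != 0) (b_neq0 : b != 0) (ab_orth : dot a b = 0).
Hypotheses (a'_neq0 : a' != 0) (b'_neq0 : b' != 0) (ab'_orth : dot a' b' = 0).
Local Notation P := (frame_plane a b).
Local Notation Q := (frame_plane a' b').
Local Notation Pi' := (frame_proj a' b').
Hypotheses (Pn : n \in P) (Qm : m \in Q) (n_neq0 : n != 0) (m_neq0 : m != 0).
Hypothesis twist_eq : forall x, twist a b n x = twist a' b' m x.

Let l := dot n m / dot n n.

Let m_eq : m = l *: n.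
Proof. by apply: (twist_kernel a_neq0 b_neq0 ab_orth Pn); rewrite // twist_eq twist_self. Qed.

Let l_neq0 : l != 0.
Proof. by apply: contraNneq m_neq0 => l0; rewrite m_eq l0 scale0r. Qed.

Let Qn : n \in Q.
Proof. by rewrite -[n]scale1r -(mulVf l_neq0) -scalerA -m_eq rpredZ. Qed.

Lemma twist_perp_scale x : x \in P -> dot n x = 0 -> (2 + l) *: x = (3 * l) *: Pi' x.
Proof.
(* [twist_eq x] says [n × v = 0] for [v = (2 + l) x - 3 l Pi' x]; also [<n, v> = 0]
   because [Pi'] is self-adjoint and fixes [n], so [v = 0]. *)
move=> Px nx0; have E := twist_eq x.
rewrite /twist (frame_proj_id a_neq0 b_neq0 ab_orth Px) m_eq linearZl /= in E.
rewrite !linearBr !linearZr /= in E.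
apply/eqP; rewrite -subr_eq0; apply/eqP; apply: (cross_dot_eq0 n_neq0).
  have -> : cross n ((2 + l) *: x - (3 * l) *: Pi' x) = 3 *: ((cross n x - 3^-1 *: cross n x)
      - l *: (cross n (Pi' x) - 3^-1 *: cross n x)).
    by rewrite linearBr !linearZr /=; row7_lin; field.
  by rewrite E subrr scaler0.
rewrite linearBr !linearZr /= nx0 (dotC (Pi' x)) (dot_frame_proj a'_neq0 b'_neq0 ab'_orth) //.
by rewrite dotC nx0 !mulr0 subrr.
Qed.

Lemma twist_perp_mem x : x \in P -> dot n x = 0 -> l != -2 -> x \in Q.
Proof.
move=> Px nx0 l_neq2; have l2_neq0 : 2 + l != 0 by rewrite addrC addr_eq0.
by rewrite -(scalerK l2_neq0 x) twist_perp_scale // !rpredZ // frame_proj_mem.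
Qed.

Lemma twist_eq_subv : m = -2 *: n \/ (P <= Q)%VS.
Proof.
have [l2|l_neq2] := eqVneq l (-2); [by left; rewrite m_eq l2 | right].
apply/subvP => x Px; set k := dot n x / dot n n.
have nn_neq0 : dot n n != 0 by rewrite dot_eq0.
rewrite -(subrK (k *: n) x) rpredD ?rpredZ // twist_perp_mem ?rpredB ?rpredZ //.
by rewrite linearBr linearZr /= divfK // subrr.
Qed.

End Rigidity.

Lemma twist_eq_frame_plane (a b a' b' n m : 'rV[R]_7) :
  a != 0 -> b != 0 -> dot a b = 0 -> a' != 0 -> b' != 0 -> dot a' b' = 0 ->
  n \in frame_plane a b -> m \in frame_plane a' b' -> n != 0 -> m != 0 ->
  (forall x, twist a b n x = twist a' b' m x) -> frame_plane a b = frame_plane a' b'.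
Proof.
move=> a0 b0 ab0 a0' b0' ab0' Pn Qm n0 m0 twist_eq.
have dimPQ : \dim (frame_plane a b) = \dim (frame_plane a' b') by rewrite !dim_frame_plane.
have [m_eq|PQ] := twist_eq_subv a0 b0 ab0 a0' b0' ab0' Pn Qm n0 m0 twist_eq; last first.
  by apply/eqP; rewrite eqEdim PQ dimPQ /=.
have [n_eq|QP] :=
  twist_eq_subv a0' b0' ab0' a0 b0 ab0 Qm Pn m0 n0 (fun x => esym (twist_eq x)).
  have m_4m : m = 4 *: m by rewrite {1}m_eq n_eq scalerA; congr (_ *: _); ring.
  have : (1 - 4 : R) *: m = 0 by rewrite scalerBl scale1r -m_4m subrr.
  by move/eqP; rewrite scaler_eq0 (negbTE m0) orbF => /eqP ?; exfalso; lra.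
by apply/eqP; rewrite eq_sym eqEdim QP dimPQ /=.
Qed.

Lemma assoc_plane_frame (P : {vspace 'rV[R]_7}) : assoc_plane P ->
  exists a b, [/\ a != 0, b != 0, dot a b = 0 & P = frame_plane a b].
Proof.
case=> dimP cross_closed.
suff [a [b [Pa Pb a0 b0 ab0]]] :
    exists a b, [/\ a \in P, b \in P, a != 0, b != 0 & dot a b = 0].
  exists a, b; split=> //; apply/eqP.
  rewrite eq_sym eqEdim dimP dim_frame_plane // leqnn andbT.
  by apply/span_subvP => f; rewrite !inE => /or3P[]/eqP->; rewrite ?cross_closed.
(* A Gram-Schmidt step on the last two vectors of a basis of [P]. *)
have := basis_free (vbasisP P); have : {subset tval (vbasis P) <= P} by move=> v /vbasis_mem.
have := size_tuple (vbasis P); move: (tval (vbasis P)) => X; rewrite dimP.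
case: X => [|p0 [|p1 [|p2 [|]]]] // _ Pp.
rewrite !free_cons nil_free span_seq1 span_nil memv0 andbT => /and3P[_ p1_indep p2_neq0].
have Pp1 : p1 \in P by apply: Pp; rewrite !inE eqxx orbT.
have Pp2 : p2 \in P by apply: Pp; rewrite !inE eqxx !orbT.
have p22_neq0 : dot p2 p2 != 0 by rewrite dot_eq0.
set t := dot p1 p2 / dot p2 p2.
exists p2, (p1 - t *: p2); split; rewrite ?rpredB ?rpredZ //.
  by apply: contraNneq p1_indep => /eqP; rewrite subr_eq0 => /eqP->; rewrite memvZ ?memv_line.
by rewrite linearBr linearZr /= (dotC p1 p2) divfK ?subrr.
Qed.

End G2.

Theorem proposition4p12 (R : realFieldType) (P Q : {vspace 'rV[R]_7}) :
  assoc_plane P -> assoc_plane Q -> P != Q ->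
  forall w : 'M[R]_7, Theta P w -> Theta Q w -> Lambda27 w.
Proof.
move=> [dimP crossP] [dimQ crossQ] neqPQ w ThP ThQ.
have [a [b [a0 b0 ab0 defP]]] := assoc_plane_frame (conj dimP crossP).
have [a' [b' [a0' b0' ab0' defQ]]] := assoc_plane_frame (conj dimQ crossQ).
rewrite defP in crossP ThP; rewrite defQ in crossQ ThQ.
have [n Pn twP] := frame_Theta_twist a0 b0 ab0 (Theta_sub_frame crossP ThP).
have [m Qm twQ] := frame_Theta_twist a0' b0' ab0' (Theta_sub_frame crossQ ThQ).
suff /subr0_eq w_eq : compl7 w = 0 by exists (proj7 w).
apply/row_matrixP => i; rewrite row0 rowE.
have [n0 | n_neq0] := eqVneq n 0; first by rewrite twP n0 /twist linear0l.
have [m0 | m_neq0] := eqVneq m 0; first by rewrite twQ m0 /twist linear0l.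
case/negP: neqPQ; rewrite defP defQ (twist_eq_frame_plane a0 b0 ab0 a0' b0' ab0' Pn Qm) //.
by move=> x; rewrite -twP twQ.
Qed.
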